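(* Let $K$ be a field of characteristic different from $2$, let $V=K^2$, and let $f:V\to V$ be the linear map with matrix $\begin{pmatrix}0&1\\0&0\end{pmatrix}$ in the standard basis (so $f\circ f=0$). Then the algebra $A=A(f,f,f,f)$ is associative and commutative, and the linear map $D:A\to A$ given by $D(e)=0$, $D(a)=0$, $D(v)=v$, $D(v')=-v'$ ($v\in V$) is a $(-1)$-derivation of $A$, i.e. $D(xy)=-D(x)y-xD(y)$ for all $x,y\in A$. Its eigenspace decomposition $A=A_0\oplus A_1\oplus A_{-1}$ with $A_0=Ke\oplus Ka$, $A_1=V$, $A_{-1}=V'$ is a non-semigroup grading of $A$: the induced partial operation on $\{0,1,-1\}$ satisfies $0*0=0$, $0*1=1*0=-1$, $0*(-1)=(-1)*0=1$, and so $(0*0)*(-1)=1\ne -1=0*(0*(-1))$.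
   Context: Let $V'$ be a second copy of $V$, identified with $V$ via a linear bijection $v\mapsto v'$. For linear maps $f_L,f_R,g_L,g_R:V\to V$, the algebra $A(f_L,f_R,g_L,g_R)$ is the vector space $Ke\oplus Ka\oplus V\oplus V'$ (with $e,a$ two new basis elements) with bilinear multiplication determined by $e^2=e$, $a^2=0$, $av=f_L(v)'$, $va=f_R(v)'$, $av'=g_L(v)$, $v'a=g_R(v)$ for $v\in V$, and all other products among $e$, $a$, elements of $V$ and elements of $V'$ equal to zero. A grading of $A$ over a set $\Gamma$ is a decomposition $A=\bigoplus_{g\in\Gamma}A_g$ together with a partial binary operation $*$ on $\Gamma$, defined for exactly those pairs $(g,h)$ with $A_gA_h\ne0$, such that $A_gA_h\subseteq A_{g*h}$ in that case. The grading is a semigroup grading if there is a semigroup $(G,\cdot)$ and an injective map $\Gamma\to G$ under which $g*h=g\cdot h$ whenever $A_gA_h\ne0$; otherwise it is a non-semigroup grading. *)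

From HB Require Import structures.
From mathcomp Require Import all_boot all_order all_algebra.
Set Implicit Arguments. Unset Strict Implicit. Unset Printing Implicit Defensive.
Import GRing.Theory.
Local Open Scope ring_scope.

Definition is_subspace (K : pzRingType) (A : lmodType K) (S : A -> Prop) :=
  [/\ S 0, (forall x y, S x -> S y -> S (x + y)) &
      (forall (c : K) x, S x -> S (c *: x))].

Definition is_grading (K : pzRingType) (A : lmodType K) (mul : A -> A -> A)
    (Gam : finType) (comp : Gam -> A -> Prop) (star : Gam -> Gam -> option Gam) :=
  [/\ (forall g, is_subspace (comp g)),
      (forall x : A, exists c : Gam -> A,
          (forall g, comp g (c g)) /\ x = \sum_(g : Gam) c g),
      (forall c c' : Gam -> A, (forall g, comp g (c g)) -> (forall g, comp g (c' g)) ->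
          \sum_(g : Gam) c g = \sum_(g : Gam) c' g -> forall g, c g = c' g),
      (forall g h, star g h = None <->
          (forall x y, comp g x -> comp h y -> mul x y = 0)) &
      (forall g h k, star g h = Some k ->
          forall x y, comp g x -> comp h y -> comp k (mul x y))].

Definition is_semigroup_grading (K : pzRingType) (A : lmodType K) (mul : A -> A -> A)
    (Gam : finType) (comp : Gam -> A -> Prop) (star : Gam -> Gam -> option Gam) :=
  is_grading mul comp star /\
  exists (G : Type) (op : G -> G -> G), associative op /\
    exists iota : Gam -> G, injective iota /\
      forall g h k, star g h = Some k -> iota k = op (iota g) (iota h).

Definition is_non_semigroup_grading (K : pzRingType) (A : lmodType K)
    (mul : A -> A -> A) (Gam : finType) (comp : Gam -> A -> Prop)
    (star : Gam -> Gam -> option Gam) :=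
  is_grading mul comp star /\ ~ is_semigroup_grading mul comp star.

(* An element  al e + be a + v + w'  is encoded as ((al, be, v), w),
   with v, w in V = K^2 (column vectors); linear maps V -> V are 2x2
   matrices acting on the left. *)
Notation Alg K := (K^o * K^o * 'cV[K]_2 * 'cV[K]_2)%type.

Section Alg.
Variable K : fieldType.

Definition ce (x : Alg K) : K := x.1.1.1.
Definition ca (x : Alg K) : K := x.1.1.2.
Definition cV (x : Alg K) : 'cV[K]_2 := x.1.2.
Definition cV' (x : Alg K) : 'cV[K]_2 := x.2.

Definition elt_e : Alg K := (1 : K, 0 : K, 0, 0).
Definition elt_a : Alg K := (0 : K, 1 : K, 0, 0).
Definition inV (v : 'cV[K]_2) : Alg K := (0 : K, 0 : K, v, 0).
Definition inV' (v : 'cV[K]_2) : Alg K := (0 : K, 0 : K, 0, v).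

(* Bilinear multiplication:  e^2 = e, a^2 = 0, a v = fL(v)', v a = fR(v)',
   a v' = gL(v), v' a = gR(v), all other products of e, a, V, V' zero. *)
Definition Amul (fL fR gL gR : 'M[K]_2) (x y : Alg K) : Alg K :=
  (ce x * ce y : K, 0 : K,
   ca x *: (gL *m cV' y) + ca y *: (gR *m cV' x),
   ca x *: (fL *m cV y) + ca y *: (fR *m cV x)).

Definition fnil : 'M[K]_2 := \matrix_(i < 2, j < 2) (if (i == 0) && (j == 1) then 1 else 0).

Definition Dmap (x : Alg K) : Alg K := (0 : K, 0 : K, cV x, - cV' x).

End Alg.

Definition Gam : finType := seq_sub [:: 0%Z; 1%Z; (-1)%Z].
Definition g0 : Gam := @SeqSub _ [:: 0%Z; 1%Z; (-1)%Z] 0%Z isT.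
Definition g1 : Gam := @SeqSub _ [:: 0%Z; 1%Z; (-1)%Z] 1%Z isT.
Definition gm1 : Gam := @SeqSub _ [:: 0%Z; 1%Z; (-1)%Z] (-1)%Z isT.

Definition gradcomp (K : fieldType) (g : Gam) (x : Alg K) : Prop :=
  if val g == 0%Z then exists al be : K, x = al *: elt_e K + be *: elt_a K
  else if val g == 1%Z then exists v, x = inV v
  else exists v, x = inV' v.

From HB Require Import structures.
From mathcomp Require Import all_boot all_order all_algebra.
Import GRing.Theory.
Local Open Scope ring_scope.

(* A product in A(fL,fR,gL,gR) has no a-component, and its V- and
   V'-components are images under the maps of the V'- and V-components of the
   factors.  For A(f,f,f,f) those components of a triple product are therefore
   images under f o f = 0, which gives associativity.  D is a (-1)-derivation
   for any maps, so a product of D-eigenvectors of weights g and h has weight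
   -(g + h); when char K <> 2 the eigenspaces are exactly Ke + Ka, V and V',
   and with nonzero maps this yields the grading 0 * 0 = 0, 0 * 1 = -1,
   0 * (-1) = 1.  In a semigroup containing these weights associativity would
   force (0 * 0) * (-1) = 0 * (0 * (-1)), i.e. 1 = -1. *)

Lemma oppv_id_eq0 {K : fieldType} {V : lmodType K} :
  (2%:R : K) != 0 -> forall v : V, - v = v -> v = 0.
Proof.
move=> charK v Nv.
have : (2%:R : K) *: v = 0 by rewrite scaler_nat mulr2n -{1}Nv addNr.
by move/eqP; rewrite scaler_eq0 (negbTE charK) => /eqP.
Qed.

Lemma mulmx_neq0 {R : pzRingType} {m n} {f : 'M[R]_(m, n)} :
  f != 0 -> exists v : 'cV_n, f *m v != 0.
Proof.
case/matrix0Pn => i [j fij]; exists (delta_mx j 0); rewrite -colE.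
by apply/matrix0Pn; exists i, 0; rewrite mxE.
Qed.

Lemma not_semigroup_grading (R : pzRingType) (A : lmodType R) (mul : A -> A -> A)
    (T : finType) (comp : T -> A -> Prop) (star : T -> T -> option T) (a b c : T) :
  star a a = Some a -> star a b = Some c -> star a c = Some b -> b != c ->
  ~ is_semigroup_grading mul comp star.
Proof.
move=> aa ab ac /eqP b_neq_c [_ [G [op [opA [iota [iota_inj iotaM]]]]]].
have := opA (iota a) (iota a) (iota c).
rewrite -(iotaM _ _ _ ac) -(iotaM _ _ _ ab) -(iotaM _ _ _ aa) -(iotaM _ _ _ ac).
by move/iota_inj/esym.
Qed.

Section Coordinates.
Variable K : fieldType.
Implicit Types (x y : Alg K) (c : K).

Lemma Alg_ext x y :
  ce x = ce y -> ca x = ca y -> cV x = cV y -> cV' x = cV' y -> x = y.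
Proof.
case: x => [[[? ?] ?] ?]; case: y => [[[? ?] ?] ?].
by rewrite /ce /ca /cV /cV' /= => -> -> -> ->.
Qed.

Lemma ceD x y : ce (x + y) = ce x + ce y. Proof. by []. Qed.
Lemma caD x y : ca (x + y) = ca x + ca y. Proof. by []. Qed.
Lemma cVD x y : cV (x + y) = cV x + cV y. Proof. by []. Qed.
Lemma cV'D x y : cV' (x + y) = cV' x + cV' y. Proof. by []. Qed.
Lemma ceZ c x : ce (c *: x) = c * ce x. Proof. by []. Qed.
Lemma caZ c x : ca (c *: x) = c * ca x. Proof. by []. Qed.
Lemma cVZ c x : cV (c *: x) = c *: cV x. Proof. by []. Qed.
Lemma cV'Z c x : cV' (c *: x) = c *: cV' x. Proof. by []. Qed.
Lemma ceN x : ce (- x) = - ce x. Proof. by []. Qed.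
Lemma caN x : ca (- x) = - ca x. Proof. by []. Qed.
Lemma cVN x : cV (- x) = - cV x. Proof. by []. Qed.
Lemma cV'N x : cV' (- x) = - cV' x. Proof. by []. Qed.

Definition coordE :=
  (ceD, caD, cVD, cV'D, ceZ, caZ, cVZ, cV'Z, ceN, caN, cVN, cV'N).

Lemma ce_Dmap x : ce (Dmap x) = 0. Proof. by []. Qed.
Lemma ca_Dmap x : ca (Dmap x) = 0. Proof. by []. Qed.
Lemma cV_Dmap x : cV (Dmap x) = cV x. Proof. by []. Qed.
Lemma cV'_Dmap x : cV' (Dmap x) = - cV' x. Proof. by []. Qed.

Definition DmapE := (ce_Dmap, ca_Dmap, cV_Dmap, cV'_Dmap).

Lemma Dmap_linear c x y : Dmap (c *: x + y) = c *: Dmap x + Dmap y.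
Proof.
by apply: Alg_ext; rewrite !(coordE, DmapE) ?mulr0 ?addr0 // opprD scalerN.
Qed.

End Coordinates.

Section Multiplication.
Variable K : fieldType.
Implicit Types (x y : Alg K) (f g fL fR gL gR : 'M[K]_2).

Lemma ceM fL fR gL gR x y : ce (Amul fL fR gL gR x y) = ce x * ce y.
Proof. by []. Qed.
Lemma caM fL fR gL gR x y : ca (Amul fL fR gL gR x y) = 0.
Proof. by []. Qed.
Lemma cVM fL fR gL gR x y :
  cV (Amul fL fR gL gR x y) = ca x *: (gL *m cV' y) + ca y *: (gR *m cV' x).
Proof. by []. Qed.
Lemma cV'M fL fR gL gR x y :
  cV' (Amul fL fR gL gR x y) = ca x *: (fL *m cV y) + ca y *: (fR *m cV x).
Proof. by []. Qed.

Definition AmulE := (ceM, caM, cVM, cV'M).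

Lemma Amul_comm f g : commutative (Amul f f g g).
Proof.
move=> x y; apply: Alg_ext; rewrite !AmulE //; [exact: mulrC | exact: addrC ..].
Qed.

Lemma Amul_assoc_sqr0 f : f *m f = 0 -> associative (Amul f f f f).
Proof.
move=> ff0; have ffv (v : 'cV[K]_2) : f *m (f *m v) = 0.
  by rewrite mulmxA ff0 mul0mx.
move=> x y z; apply: Alg_ext; rewrite !AmulE ?mulrA //;
  by rewrite !mulmxDr -!scalemxAr !ffv !(scaler0, scale0r, addr0, add0r).
Qed.

Lemma Dmap_antiderivation fL fR gL gR x y :
  Dmap (Amul fL fR gL gR x y) =
    - Amul fL fR gL gR (Dmap x) y - Amul fL fR gL gR x (Dmap y).
Proof.
apply: Alg_ext; rewrite !(coordE, AmulE, DmapE) ?(mul0r, mulr0, subr0, oppr0) //.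
- by rewrite !scale0r add0r addr0 !mulmxN !scalerN !opprK addrC.
- by rewrite !scale0r add0r addr0 opprD addrC.
Qed.

End Multiplication.

Lemma Gam_cases (g : Gam) : [\/ g = g0, g = g1 | g = gm1].
Proof.
have : ssval g \in [:: 0%Z; 1%Z; (-1)%Z] := ssvalP g.
by rewrite !inE => /or3P[] /eqP gE; [apply: Or31 | apply: Or32 | apply: Or33];
  apply: val_inj.
Qed.

Lemma big_Gam (V : nmodType) (F : Gam -> V) :
  \sum_(g : Gam) F g = F g0 + F g1 + F gm1.
Proof.
rewrite (bigD1 g0) // (bigD1 g1) // (bigD1 gm1) //= big1 ?addr0 ?addrA //.
by move=> g; case: (Gam_cases g) => ->.
Qed.

Definition Gam_star (g h : Gam) : option Gam :=
  if val g == 0%Z then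
    Some (if val h == 0%Z then g0 else if val h == 1%Z then gm1 else g1)
  else if val h == 0%Z then Some (if val g == 1%Z then gm1 else g1)
  else None.

Lemma Gam_star_val g h k : Gam_star g h = Some k -> val k = (- (val g + val h))%Z.
Proof.
by case: (Gam_cases g) => ->; case: (Gam_cases h) => -> //= -[<-].
Qed.

Lemma Gam_star_None_neq0 g h : Gam_star g h = None -> g != g0 /\ h != g0.
Proof. by case: (Gam_cases g) => ->; case: (Gam_cases h) => ->. Qed.

Section Grading.
Variable K : fieldType.
Implicit Types (x y : Alg K) (g h k : Gam).

Lemma gradcomp0E x : gradcomp g0 x <-> cV x = 0 /\ cV' x = 0.
Proof.
split=> [[al [be ->]] | [vx wx]]; first by rewrite !coordE /= !scaler0 addr0.
exists (ce x), (ca x); apply: Alg_ext; rewrite !coordE //=.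
- by rewrite mulr1 mulr0 addr0.
- by rewrite mulr1 mulr0 add0r.
- by rewrite vx !scaler0 addr0.
- by rewrite wx !scaler0 addr0.
Qed.

Lemma gradcomp1E x : gradcomp g1 x <-> [/\ ce x = 0, ca x = 0 & cV' x = 0].
Proof. by split=> [[? ->] | [? ? ?]] //; exists (cV x); apply: Alg_ext. Qed.

Lemma gradcompN1E x : gradcomp gm1 x <-> [/\ ce x = 0, ca x = 0 & cV x = 0].
Proof. by split=> [[? ->] | [? ? ?]] //; exists (cV' x); apply: Alg_ext. Qed.

Lemma Dmap_eigenE (r : K) x : Dmap x = r *: x <->
  [/\ r * ce x = 0, r * ca x = 0, r *: cV x = cV x & r *: cV' x = - cV' x].
Proof.
split=> [Dx | [? ? ? ?]]; last by apply: Alg_ext; rewrite !(coordE, DmapE).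
by split; [move: (congr1 (@ce K) Dx) | move: (congr1 (@ca K) Dx)
  | move: (congr1 (@cV K) Dx) | move: (congr1 (@cV' K) Dx)];
  rewrite !(coordE, DmapE) => /esym ->.
Qed.

Lemma gradcomp_eigen (charK : (2%:R : K) != 0) g x :
  gradcomp g x <-> Dmap x = (val g)%:~R *: x.
Proof.
apply: iff_trans (iff_sym (Dmap_eigenE _ x)).
case: (Gam_cases g) => ->;
  rewrite /= ?(mul0r, mul1r, mulN1r, scale0r, scale1r, scaleN1r).
- apply: iff_trans (gradcomp0E x) _.
  split=> [[vx wx] | [_ _ <- /esym/eqP]]; first by rewrite vx wx oppr0.
  by rewrite oppr_eq0 => /eqP.
- apply: iff_trans (gradcomp1E x) _.
  split=> [[-> -> ->] | [-> -> _ /esym/(oppv_id_eq0 charK)]] //.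
  by rewrite oppr0.
- apply: iff_trans (gradcompN1E x) _.
  split=> [[-> -> ->] | [/eqP ex /eqP ax /(oppv_id_eq0 charK) vx _]].
    by split; rewrite ?oppr0.
  by split=> //; apply/eqP; rewrite -oppr_eq0.
Qed.

Definition homog g x : Alg K :=
  if val g == 0%Z then (ce x : K^o, ca x : K^o, 0, 0)
  else if val g == 1%Z then inV (cV x) else inV' (cV' x).

Lemma gradcomp_homog g x : gradcomp g (homog g x).
Proof.
by case: (Gam_cases g) => ->; [apply/gradcomp0E | exists (cV x) | exists (cV' x)].
Qed.

Lemma sum_homog x : x = \sum_(g : Gam) homog g x.
Proof. by apply: Alg_ext; rewrite big_Gam !coordE /= ?addr0 ?add0r. Qed.

Lemma homog_sum {c : Gam -> Alg K} :
  (forall g, gradcomp g (c g)) -> forall g, homog g (\sum_(h : Gam) c h) = c g.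
Proof.
move=> cP g; have /gradcomp0E[v0 w0] := cP g0.
have /gradcomp1E[e1 a1 w1] := cP g1; have /gradcompN1E[e2 a2 v2] := cP gm1.
case: (Gam_cases g) => ->; apply: Alg_ext;
  rewrite /homog /= ?big_Gam ?coordE;
  by rewrite ?v0 ?w0 ?e1 ?a1 ?w1 ?e2 ?a2 ?v2 ?addr0 ?add0r.
Qed.

Lemma gradcomp_subspace g : is_subspace (@gradcomp K g).
Proof.
case: (Gam_cases g) => ->; split.
- exact/gradcomp0E.
- move=> x y /gradcomp0E[vx wx] /gradcomp0E[vy wy]; apply/gradcomp0E.
  by rewrite !coordE vx wx vy wy !addr0.
- move=> c x /gradcomp0E[vx wx]; apply/gradcomp0E.
  by rewrite !coordE vx wx !scaler0.
- exact/gradcomp1E.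
- move=> x y /gradcomp1E[ex ax wx] /gradcomp1E[ey ay wy]; apply/gradcomp1E.
  by rewrite !coordE ex ax wx ey ay wy !addr0.
- move=> c x /gradcomp1E[ex ax wx]; apply/gradcomp1E.
  by rewrite !coordE ex ax wx mulr0 !scaler0.
- exact/gradcompN1E.
- move=> x y /gradcompN1E[ex ax vx] /gradcompN1E[ey ay vy]; apply/gradcompN1E.
  by rewrite !coordE ex ax vx ey ay vy !addr0.
- move=> c x /gradcompN1E[ex ax vx]; apply/gradcompN1E.
  by rewrite !coordE ex ax vx mulr0 !scaler0.
Qed.

Lemma gradcomp_ce_ca {g} :
  g != g0 -> forall x, gradcomp g x -> ce x = 0 /\ ca x = 0.
Proof.
by case: (Gam_cases g) => -> // _ x; [case/gradcomp1E | case/gradcompN1E] => ->.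
Qed.

Section Products.
Variables fL fR gL gR : 'M[K]_2.
Local Notation mul := (Amul fL fR gL gR).

Lemma AmulZl (r : K) x y : mul (r *: x) y = r *: mul x y.
Proof.
apply: Alg_ext; rewrite !(coordE, AmulE) ?mulr0 //;
  by [rewrite mulrA | rewrite linearZ /= scalerDr !scalerA (mulrC (ca y))].
Qed.

Lemma AmulZr (r : K) x y : mul x (r *: y) = r *: mul x y.
Proof.
apply: Alg_ext; rewrite !(coordE, AmulE) ?mulr0 //;
  by [rewrite mulrCA | rewrite linearZ /= scalerDr !scalerA (mulrC (ca x))].
Qed.

Lemma Dmap_mul_eigen {r s : K} {x y} :
  Dmap x = r *: x -> Dmap y = s *: y -> Dmap (mul x y) = - (r + s) *: mul x y.
Proof.
move=> Dx Dy; rewrite Dmap_antiderivation Dx Dy AmulZl AmulZr.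
by rewrite scaleNr scalerDl opprD.
Qed.

Lemma gradcomp_mul (charK : (2%:R : K) != 0) g h k x y :
  Gam_star g h = Some k -> gradcomp g x -> gradcomp h y -> gradcomp k (mul x y).
Proof.
move=> /Gam_star_val kE /(gradcomp_eigen charK) Dx /(gradcomp_eigen charK) Dy.
by apply/(gradcomp_eigen charK); rewrite (Dmap_mul_eigen Dx Dy) kE intrN intrD.
Qed.

Lemma gradcomp_mul_eq0 g h x y :
  Gam_star g h = None -> gradcomp g x -> gradcomp h y -> mul x y = 0.
Proof.
move=> /Gam_star_None_neq0[g_neq0 h_neq0] /(gradcomp_ce_ca g_neq0)[ex ax].
move=> /(gradcomp_ce_ca h_neq0)[ey ay].
by apply: Alg_ext; rewrite AmulE /= ?ex ?ax ?ay ?mul0r ?scale0r ?addr0.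
Qed.

Hypotheses (fL_neq0 : fL != 0) (fR_neq0 : fR != 0).
Hypotheses (gL_neq0 : gL != 0) (gR_neq0 : gR != 0).

Lemma gradcomp_mul_neq0 {g h k} : Gam_star g h = Some k ->
  exists x y, [/\ gradcomp g x, gradcomp h y & mul x y != 0].
Proof.
have coord_neq0 (T : eqType) (c : Alg K -> T) z : c z != c 0 -> z != 0.
  by apply: contra => /eqP ->.
have e_homog : gradcomp g0 (elt_e K) by apply/gradcomp0E.
have a_homog : gradcomp g0 (elt_a K) by apply/gradcomp0E.
have [vL fLv] := mulmx_neq0 fL_neq0; have [vR fRv] := mulmx_neq0 fR_neq0.
have [wL gLw] := mulmx_neq0 gL_neq0; have [wR gRw] := mulmx_neq0 gR_neq0.
case: (Gam_cases g) => ->; case: (Gam_cases h) => -> // _.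
- exists (elt_e K), (elt_e K); split=> //.
  by apply/eqP => /(congr1 (@ce K)); rewrite ceM /= mulr1 => /eqP; rewrite oner_eq0.
- exists (elt_a K), (inV vL); split=> //; first by exists vL.
  by apply: (coord_neq0 _ (@cV' K)); rewrite cV'M /= scale1r scale0r addr0.
- exists (elt_a K), (inV' wL); split=> //; first by exists wL.
  by apply: (coord_neq0 _ (@cV K)); rewrite cVM /= scale1r scale0r addr0.
- exists (inV vR), (elt_a K); split=> //; first by exists vR.
  by apply: (coord_neq0 _ (@cV' K)); rewrite cV'M /= scale1r scale0r add0r.
- exists (inV' wR), (elt_a K); split=> //; first by exists wR.
  by apply: (coord_neq0 _ (@cV K)); rewrite cVM /= scale1r scale0r add0r.
Qed.

Lemma Gam_star_NoneE g h : Gam_star g h = None <->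
  (forall x y, gradcomp g x -> gradcomp h y -> mul x y = 0).
Proof.
split=> [/gradcomp_mul_eq0 // | mul0]; case ghk: (Gam_star g h) => [k|] //.
have [x [y [gx hy]]] := gradcomp_mul_neq0 ghk.
by rewrite (mul0 x y gx hy) eqxx.
Qed.

Lemma Amul_grading (charK : (2%:R : K) != 0) :
  is_grading mul (@gradcomp K) Gam_star.
Proof.
split; first exact: gradcomp_subspace.
- move=> x; exists (homog^~ x).
  by split=> [g|]; [exact: gradcomp_homog | exact: sum_homog].
- by move=> c c' cP c'P cc' g; rewrite -(homog_sum cP) cc' (homog_sum c'P).
- exact: Gam_star_NoneE.
- by move=> g h k ghk x y; apply: gradcomp_mul.
Qed.

End Products.

End Grading.

Lemma fnil_sqr0 (K : fieldType) : fnil K *m fnil K = 0.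
Proof.
apply/matrixP => i j; rewrite !mxE big_ord_recr big_ord_recr big_ord0 !mxE.
by case: i => [[|[|?]] ?] //; case: j => [[|[|?]] ?] //=;
  rewrite ?mulr0 ?mul0r ?addr0.
Qed.

Lemma fnil_neq0 (K : fieldType) : fnil K != 0.
Proof. by apply/matrix0Pn; exists 0, 1; rewrite mxE oner_eq0. Qed.

Theorem mainTheorem5 (K : fieldType) (charK : (2%:R : K) != 0) :
  let f := fnil K in
  let mul := Amul f f f f in
  (forall x y z : Alg K, mul x (mul y z) = mul (mul x y) z) /\
  (forall x y : Alg K, mul x y = mul y x) /\
  (forall (c : K) (x y : Alg K), Dmap (c *: x + y) = c *: Dmap x + Dmap y) /\
  (forall x y : Alg K, Dmap (mul x y) = - mul (Dmap x) y - mul x (Dmap y)) /\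
  (forall (g : Gam) (x : Alg K), gradcomp g x <-> Dmap x = (val g)%:~R *: x) /\
  exists star : Gam -> Gam -> option Gam,
    is_non_semigroup_grading mul (@gradcomp K) star /\
    star g0 g0 = Some g0 /\
    star g0 g1 = Some gm1 /\ star g1 g0 = Some gm1 /\
    star g0 gm1 = Some g1 /\ star gm1 g0 = Some g1 /\
    obind (fun k => star k gm1) (star g0 g0) = Some g1 /\
    obind (star g0) (star g0 gm1) = Some gm1 /\
    g1 != gm1.
Proof.
move=> f mul; have f_neq0 := fnil_neq0 K.
split; first exact/Amul_assoc_sqr0/fnil_sqr0.
split; first exact: Amul_comm.
split; first exact: Dmap_linear.
split; first exact: Dmap_antiderivation.
split; first exact: gradcomp_eigen.
exists Gam_star; split; last by [].
split; first exact: Amul_grading.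
exact: (@not_semigroup_grading _ _ _ _ _ _ g0 gm1 g1).
Qed.
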